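(* Fix finite nonempty sets $A$ and $\Omega$, a prior $\mu_0$ on $\Omega$ with $\mu_0(\omega)>0$ for all $\omega$, and a finite message set $M$ with $|M|>\max\{|\Omega|,|A|\}$. There is a set of environments of Lebesgue measure one in $[0,1]^{2|A||\Omega|}$ such that, for every environment in this set: if cheap-talk Sender values randomization, then committed Sender values randomization.
   Context: An environment is a pair $(u_S,u_R)$ of functions $A\times\Omega\to[0,1]$, identified with a point of $[0,1]^{2|A||\Omega|}$. A messaging strategy is $\sigma:\Omega\to\Delta M$ and an action strategy is $\rho:M\to\Delta A$. For $i\in\{S,R\}$, $U_i(\sigma,\rho)=\sum_{\omega,m,a}\mu_0(\omega)\sigma(m|\omega)\rho(a|m)u_i(a,\omega)$. A profile $(\sigma,\rho)$ is S-BR if $\sigma\in\arg\max_{\sigma'}U_S(\sigma',\rho)$, and R-BR if $\rho\in\arg\max_{\rho'}U_R(\sigma,\rho')$. A persuasion profile is an R-BR profile; the persuasion payoff is the maximum of $U_S$ over persuasion profiles. A cheap-talk equilibrium is an S-BR and R-BR profile; the cheap-talk payoff is the maximum of $U_S$ over cheap-talk equilibria. $\sigma$ is partitional if for every $\omega$ some $m$ has $\sigma(m|\omega)=1$. The partitional persuasion payoff (resp. partitional cheap-talk payoff) is the maximum of $U_S$ over persuasion profiles (resp. cheap-talk equilibria) with partitional $\sigma$. Committed Sender values randomization if the persuasion payoff strictly exceeds the partitional persuasion payoff. Cheap-talk Sender values randomization if the cheap-talk payoff strictly exceeds the partitional cheap-talk payoff. *)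

From mathcomp Require Import all_boot all_order all_algebra.
From mathcomp Require Import reals.
Set Implicit Arguments. Unset Strict Implicit. Unset Printing Implicit Defensive.
Import Order.TTheory GRing.Theory Num.Theory.
Local Open Scope ring_scope.

Section Game.
Variables (R : realType) (A Omega M : finType).

Definition is_dist (T : finType) (p : T -> R) : Prop :=
  (forall x, 0 <= p x) /\ \sum_(x : T) p x = 1.

Definition msg_strategy (sigma : Omega -> M -> R) : Prop :=
  forall w, is_dist (sigma w).

Definition act_strategy (rho : M -> A -> R) : Prop :=
  forall m, is_dist (rho m).

Definition payoff (mu0 : Omega -> R) (u : A -> Omega -> R)
    (sigma : Omega -> M -> R) (rho : M -> A -> R) : R :=
  \sum_(w : Omega) \sum_(m : M) \sum_(a : A)
     mu0 w * sigma w m * rho m a * u a w.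

Definition S_BR mu0 (uS : A -> Omega -> R) sigma rho : Prop :=
  msg_strategy sigma /\ act_strategy rho /\
  forall sigma', msg_strategy sigma' -> payoff mu0 uS sigma' rho <= payoff mu0 uS sigma rho.

Definition R_BR mu0 (uR : A -> Omega -> R) sigma rho : Prop :=
  msg_strategy sigma /\ act_strategy rho /\
  forall rho', act_strategy rho' -> payoff mu0 uR sigma rho' <= payoff mu0 uR sigma rho.

Definition partitional (sigma : Omega -> M -> R) : Prop :=
  forall w, exists m, sigma w m = 1.

Definition is_max (P : (Omega -> M -> R) -> (M -> A -> R) -> Prop)
    (f : (Omega -> M -> R) -> (M -> A -> R) -> R) (v : R) : Prop :=
  (exists sigma rho, P sigma rho /\ f sigma rho = v) /\
  (forall sigma rho, P sigma rho -> f sigma rho <= v).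

Definition persuasion_profile mu0 (uR : A -> Omega -> R) sigma rho : Prop :=
  R_BR mu0 uR sigma rho.

Definition cheap_talk_eq mu0 (uS uR : A -> Omega -> R) sigma rho : Prop :=
  S_BR mu0 uS sigma rho /\ R_BR mu0 uR sigma rho.

Definition committed_values_randomization mu0 (uS uR : A -> Omega -> R) : Prop :=
  exists v v',
    is_max (persuasion_profile mu0 uR) (payoff mu0 uS) v /\
    is_max (fun s r => persuasion_profile mu0 uR s r /\ partitional s) (payoff mu0 uS) v' /\
    v' < v.

Definition cheap_talk_values_randomization mu0 (uS uR : A -> Omega -> R) : Prop :=
  exists v v',
    is_max (cheap_talk_eq mu0 uS uR) (payoff mu0 uS) v /\
    is_max (fun s r => cheap_talk_eq mu0 uS uR s r /\ partitional s) (payoff mu0 uS) v' /\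
    v' < v.

End Game.

(* Environments as points of [0,1]^(2|A||Omega|): coordinates indexed by
   bool * A * Omega; true = Sender, false = Receiver. *)
Definition env_uS (R : realType) (A Omega : finType) (e : bool * A * Omega -> R)
  : A -> Omega -> R := fun a w => e (true, a, w).
Definition env_uR (R : realType) (A Omega : finType) (e : bool * A * Omega -> R)
  : A -> Omega -> R := fun a w => e (false, a, w).

Definition unit_cube (R : realType) (I : finType) (x : I -> R) : Prop :=
  forall i, 0 <= x i <= 1.

Definition lebesgue_null (R : realType) (I : finType) (N : (I -> R) -> Prop) : Prop :=
  forall eps : R, 0 < eps ->
  exists (a b : nat -> I -> R),
    (forall k i, a k i <= b k i) /\
    (forall x, N x -> exists k, forall i, a k i <= x i <= b k i) /\
    (forall n, \sum_(k < n) \prod_(i : I) (b k i - a k i) <= eps).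

(* For almost every environment the Receiver is generic: no two actions tie in expected
   payoff on a nonempty set of states, because each such tie is a nontrivial hyperplane,
   which meets the unit cube in a null set.  A generic Receiver has a unique best reply to
   every message used by a partitional strategy, so the partitional persuasion payoff is a
   finite maximum, attained by a pure profile (f, b).  Suppose committed Sender does not
   value randomization.  Then (f, b) is optimal among all persuasion profiles.  Letting
   type w send m' instead of f w with a small probability t keeps b a best reply, since the
   Receiver's best replies win by a positive margin; so optimality forces every type w to
   weakly prefer b (f w) to b m', i.e. (f, b) is a cheap-talk equilibrium.  Therefore the
   partitional cheap-talk payoff is at least the persuasion payoff, which bounds the
   cheap-talk payoff, and cheap-talk Sender does not value randomization either. *)

From mathcomp Require Import all_boot all_order all_algebra.
From mathcomp Require Import reals.
From mathcomp Require Import ring lra.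
From mathcomp Require Import boolp.
From mathcomp Require all_classical all_analysis.
Set Implicit Arguments. Unset Strict Implicit. Unset Printing Implicit Defensive.
Import Order.TTheory GRing.Theory Num.Theory.
Local Open Scope ring_scope.

Lemma sum_indicator (R : pzRingType) (T : finType) (F : T -> R) (y : T) :
  \sum_x (x == y)%:R * F x = F y.
Proof.
by rewrite (bigD1 y) //= eqxx mul1r big1 ?addr0 // => x /negbTE ->; rewrite mul0r.
Qed.

Section Distributions.
Variables (R : realType) (T : finType).
Implicit Types (p : T -> R) (y : T).

Lemma is_dist_indicator y : is_dist (fun x => (x == y)%:R : R).
Proof.
split=> [x|]; first exact: ler0n.
by under eq_bigr do rewrite -[_%:R]mulr1; rewrite sum_indicator.
Qed.

Lemma is_dist_bounds p x : is_dist p -> 0 <= p x <= 1.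
Proof.
by move=> [ge0 sum1]; rewrite ge0 -sum1 (bigD1 x) //= lerDl sumr_ge0.
Qed.

Lemma is_dist_supported p y : is_dist p -> (forall x, x != y -> p x = 0) ->
  p = fun x => (x == y)%:R.
Proof.
move=> [_ sum1] p0; apply: funext => x; have [->|/p0 //] := eqVneq x y.
by rewrite -sum1 (bigD1 y) //= big1 ?addr0.
Qed.

Lemma is_dist_point_mass p y : is_dist p -> p y = 1 -> p = fun x => (x == y)%:R.
Proof.
move=> [ge0 sum1] py1; apply: is_dist_supported => // x.
have others0 : \sum_(x | x != y) p x = 0 by move: sum1; rewrite (bigD1 y) //= py1; lra.
exact: (psumr_eq0P (fun x _ => ge0 x) others0).
Qed.

End Distributions.
Arguments is_dist_indicator {R T} y.

Section Strategies.
Variables (R : realType) (A Omega M : finType) (mu0 : Omega -> R).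
Implicit Types (u : A -> Omega -> R) (sigma : Omega -> M -> R) (rho : M -> A -> R)
  (b : M -> A) (f : Omega -> M).

Definition pure_act b : M -> A -> R := fun m a => (a == b m)%:R.
Definition pure_msg f : Omega -> M -> R := fun w m => (m == f w)%:R.

Definition msg_value u sigma (m : M) (a : A) : R := \sum_w mu0 w * sigma w m * u a w.

Lemma act_strategy_pure b : act_strategy (pure_act b).
Proof. by move=> m; apply: is_dist_indicator. Qed.

Lemma msg_strategy_pure f : msg_strategy (pure_msg f).
Proof. by move=> w; apply: is_dist_indicator. Qed.

Lemma payoffE u sigma rho :
  payoff mu0 u sigma rho = \sum_m \sum_a rho m a * msg_value u sigma m a.
Proof.
rewrite /payoff exchange_big; apply: eq_bigr => m _ /=.
rewrite exchange_big; apply: eq_bigr => a _ /=.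
by rewrite /msg_value mulr_sumr; apply: eq_bigr => w _; ring.
Qed.

Lemma payoff_pure_act u sigma b :
  payoff mu0 u sigma (pure_act b) = \sum_w \sum_m mu0 w * sigma w m * u (b m) w.
Proof.
rewrite /payoff; apply: eq_bigr => w _; apply: eq_bigr => m _.
by rewrite -(sum_indicator (fun a => mu0 w * sigma w m * u a w) (b m));
  apply: eq_bigr => a _; rewrite /pure_act; ring.
Qed.

Lemma payoff_pure_msg u f rho :
  payoff mu0 u (pure_msg f) rho = \sum_w \sum_a mu0 w * rho (f w) a * u a w.
Proof.
rewrite /payoff; apply: eq_bigr => w _.
rewrite -(sum_indicator (fun m => \sum_a mu0 w * rho m a * u a w) (f w)).
by apply: eq_bigr => m _; rewrite mulr_sumr; apply: eq_bigr => a _; rewrite /pure_msg; ring.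
Qed.

Lemma R_BR_pure_act u sigma b : msg_strategy sigma ->
    (forall m a, msg_value u sigma m a <= msg_value u sigma m (b m)) ->
  R_BR mu0 u sigma (pure_act b).
Proof.
move=> sigma_ok b_best; split=> //; split; first exact: act_strategy_pure.
move=> rho rho_ok; rewrite !payoffE; apply: ler_sum => m _.
have [rho_ge0 rho_sum1] := rho_ok m.
rewrite sum_indicator -[X in _ <= X]mul1r -rho_sum1 mulr_suml.
by apply: ler_sum => a _; apply: ler_wpM2l.
Qed.

Lemma R_BR_row_opt u sigma rho m (p : A -> R) : R_BR mu0 u sigma rho -> is_dist p ->
  \sum_a p a * msg_value u sigma m a <= \sum_a rho m a * msg_value u sigma m a.
Proof.
move=> [_ [rho_ok rho_best]] p_ok.
pose rho' m' := if m' == m then p else rho m'.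
have rho'_ok : act_strategy rho' by move=> m'; rewrite /rho'; case: eqP.
have := rho_best rho' rho'_ok; rewrite !payoffE (bigD1 m) //= [X in _ <= X](bigD1 m) //=.
rewrite /rho' eqxx (eq_bigr (fun m' => \sum_a rho m' a * msg_value u sigma m' a)) ?lerD2r //.
by move=> m' /negbTE ->.
Qed.

Lemma R_BR_strict_best u sigma rho m (a_best : A) : R_BR mu0 u sigma rho ->
    (forall a, a != a_best -> msg_value u sigma m a < msg_value u sigma m a_best) ->
  rho m = fun a => (a == a_best)%:R.
Proof.
move=> rho_BR strict; have [rho_ge0 rho_sum1] := rho_BR.2.1 m.
have := R_BR_row_opt m rho_BR (is_dist_indicator a_best); rewrite sum_indicator.
set W := msg_value u sigma m => best_le.
have loss_ge0 a : 0 <= rho m a * (W a_best - W a).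
  by rewrite mulr_ge0 // subr_ge0; have [->|/strict/ltW] := eqVneq a a_best.
have loss0 : \sum_a rho m a * (W a_best - W a) = 0.
  apply/eqP; rewrite eq_le sumr_ge0 ?andbT //.
  by under eq_bigr do rewrite mulrBr; rewrite sumrB -mulr_suml rho_sum1 mul1r subr_le0.
apply: is_dist_supported => // a a_ne.
move/eqP: (psumr_eq0P (fun a _ => loss_ge0 a) loss0 (i := a) isT).
rewrite mulf_eq0 subr_eq0 => /orP[/eqP // | /eqP eqW].
by move: (strict a a_ne); rewrite -/W eqW ltxx.
Qed.

Lemma S_BR_pure u f b : (forall w, 0 <= mu0 w) ->
    (forall w m, u (b m) w <= u (b (f w)) w) ->
  S_BR mu0 u (pure_msg f) (pure_act b).
Proof.
move=> mu0_ge0 truthful; split; first exact: msg_strategy_pure.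
split; first exact: act_strategy_pure.
move=> sigma sigma_ok; rewrite !payoff_pure_act; apply: ler_sum => w _.
have [sigma_ge0 sigma_sum1] := sigma_ok w.
rewrite [X in _ <= X](eq_bigr (fun m => (m == f w)%:R * (mu0 w * u (b m) w))); last first.
  by move=> m _; rewrite /pure_msg; ring.
rewrite sum_indicator -[X in _ <= X]mulr1 -sigma_sum1 mulr_sumr; apply: ler_sum => m _.
by rewrite -!mulrA [u _ _ * _]mulrC ler_wpM2l // ler_wpM2l.
Qed.

Lemma partitional_pure_msg sigma : msg_strategy sigma -> partitional sigma ->
  exists f, sigma = pure_msg f.
Proof.
move=> sigma_ok /fin_all_exists [f sigma_f]; exists f; apply: funext => w.
exact: is_dist_point_mass (sigma_ok w) (sigma_f w).
Qed.

Definition deviate f (w : Omega) (m' : M) (t : R) : Omega -> M -> R :=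
  fun v m => pure_msg f v m + t * ((v == w)%:R * ((m == m')%:R - (m == f w)%:R)).

Lemma msg_strategy_deviate f w m' t : 0 <= t <= 1 -> msg_strategy (deviate f w m' t).
Proof.
move=> /andP[t_ge0 t_le1] v; split=> [m|].
  rewrite /deviate /pure_msg; have [->|_] := eqVneq v w; last by rewrite mul0r mulr0 addr0.
  by case: (m == f w); case: (m == m'); rewrite /= ?mul1r; lra.
rewrite /deviate big_split /= (msg_strategy_pure f v).2 -!mulr_sumr sumrB.
by rewrite !(is_dist_indicator _).2 subrr !mulr0 addr0.
Qed.

Lemma msg_value_deviate u f w m' t m a :
  msg_value u (deviate f w m' t) m a =
  msg_value u (pure_msg f) m a + t * (mu0 w * ((m == m')%:R - (m == f w)%:R) * u a w).
Proof.
pose F v := t * (mu0 v * ((m == m')%:R - (m == f w)%:R) * u a v).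
rewrite -[t * _](sum_indicator F w) /msg_value -big_split /=.
by apply: eq_bigr => v _; rewrite /deviate /F; ring.
Qed.

Lemma payoff_deviate u f w m' t b :
  payoff mu0 u (deviate f w m' t) (pure_act b) =
  payoff mu0 u (pure_msg f) (pure_act b) + t * (mu0 w * (u (b m') w - u (b (f w)) w)).
Proof.
rewrite !payoffE /pure_act.
under eq_bigr do rewrite sum_indicator msg_value_deviate.
under [in RHS]eq_bigr do rewrite sum_indicator.
rewrite big_split /= -mulr_sumr; congr (_ + t * _).
rewrite mulrBr -(sum_indicator (fun m => mu0 w * u (b m) w) m').
rewrite -(sum_indicator (fun m => mu0 w * u (b m) w) (f w)) -sumrB.
by apply: eq_bigr => m _; ring.
Qed.
End Strategies.

Arguments pure_act {R A M} b.
Arguments pure_msg {R Omega M} f.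

Section Topology.
Import all_classical all_analysis numFieldNormedType.Exports.
Local Open Scope classical_set_scope.
Variables (R : realType) (T : topologicalType).

Lemma continuous_mul (F G : T -> R) : continuous F -> continuous G ->
  continuous (fun x => F x * G x).
Proof. by move=> F_cont G_cont x; apply: continuousM; [exact: F_cont | exact: G_cont]. Qed.

Lemma closed_le_continuous (F G : T -> R) : continuous F -> continuous G ->
  closed [set x | F x <= G x].
Proof.
move=> F_cont G_cont.
have -> : [set x | F x <= G x] = (fun x => G x - F x) @^-1` [set y | 0 <= y].
  by apply/seteqP; split=> x /=; rewrite subr_ge0.
apply: (proj1 (continuous_closedP _)); last exact: closed_ge.
by move=> x; apply: continuousB; [apply: G_cont | apply: F_cont].
Qed.

Lemma closed_eq_continuous (F G : T -> R) : continuous F -> continuous G ->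
  closed [set x | F x = G x].
Proof.
move=> F_cont G_cont.
have -> : [set x | F x = G x] = [set x | F x <= G x] `&` [set x | G x <= F x].
  by apply/seteqP; split=> x /=; [move=> ->|case=> *; apply/eqP; rewrite eq_le; apply/andP].
by apply: closedI; apply: closed_le_continuous.
Qed.

Lemma closed_and (S1 S2 : set T) : closed S1 -> closed S2 -> closed [set x | S1 x /\ S2 x].
Proof. exact: closedI. Qed.

Lemma closed_forall (X : Type) (S : X -> set T) : (forall y, closed (S y)) ->
  closed [set x | forall y, S y x].
Proof.
move=> S_closed; have -> : [set x | forall y, S y x] = \bigcap_(y in setT) S y.
  by apply/seteqP; split=> x /= Sx y //; apply: Sx.
exact: closed_bigI.
Qed.

Lemma closed_implies (P : Prop) (S : set T) : closed S -> closed [set x | P -> S x].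
Proof.
move=> S_closed; have [p|np] := pselect P.
  by rewrite (_ : [set x | P -> S x] = S) //; apply/seteqP; split=> x /=; [apply | move=> ? _].
by rewrite (_ : [set x | P -> S x] = setT) ?closedT //; apply/seteqP; split=> x // _ /np.
Qed.

End Topology.

Section PersuasionValue.
Import all_classical all_analysis numFieldNormedType.Exports.
Local Open Scope classical_set_scope.
Variables (R : realType) (A Omega M : finType) (mu0 : Omega -> R).

Lemma closed_is_dist (T : topologicalType) (X : finType) (p : T -> X -> R) :
  (forall y, continuous (p^~ y)) -> closed [set t | is_dist (p t)].
Proof.
move=> p_cont; apply: closed_and.
  apply: closed_forall => y.
  by apply: closed_le_continuous; [exact: cst_continuous | exact: p_cont].
apply: closed_eq_continuous; last exact: cst_continuous.
by apply: continuous_big => [|y _]; [exact: add_continuous | exact: p_cont].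
Qed.

Lemma continuous_payoff (T : topologicalType) u
    (s : T -> Omega -> M -> R) (r : T -> M -> A -> R) :
    (forall w m, continuous (fun t => s t w m)) ->
    (forall m a, continuous (fun t => r t m a)) ->
  continuous (fun t => payoff mu0 u (s t) (r t)).
Proof.
move=> s_cont r_cont; rewrite /payoff.
do 3!(apply: continuous_big => [|? _]; first exact: add_continuous).
apply: continuous_mul; last exact: cst_continuous.
apply: continuous_mul; last exact: r_cont.
by apply: continuous_mul; [exact: cst_continuous | exact: s_cont].
Qed.

(* Profiles are encoded as row vectors, whose finite products of segments are compact. *)
Local Notation I := ((Omega * M) + (M * A))%type.
Local Notation V := 'rV[R]_#|{: I}|.

Definition msg_of_vec (v : V) : Omega -> M -> R :=
  fun w m => v ord0 (enum_rank (inl (w, m) : I)).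
Definition act_of_vec (v : V) : M -> A -> R :=
  fun m a => v ord0 (enum_rank (inr (m, a) : I)).
Definition vec_of_profile (sigma : Omega -> M -> R) (rho : M -> A -> R) : V :=
  \row_i match enum_val i with inl (w, m) => sigma w m | inr (m, a) => rho m a end.

Lemma msg_of_vecK sigma rho : msg_of_vec (vec_of_profile sigma rho) = sigma.
Proof. by apply: funext => w; apply: funext => m; rewrite /msg_of_vec mxE enum_rankK. Qed.

Lemma act_of_vecK sigma rho : act_of_vec (vec_of_profile sigma rho) = rho.
Proof. by apply: funext => m; apply: funext => a; rewrite /act_of_vec mxE enum_rankK. Qed.

Lemma closed_R_BR uR : closed [set v : V | R_BR mu0 uR (msg_of_vec v) (act_of_vec v)].
Proof.
apply: closed_and.
  by apply: closed_forall => w; apply: closed_is_dist => m; exact: coord_continuous.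
apply: closed_and.
  by apply: closed_forall => m; apply: closed_is_dist => a; exact: coord_continuous.
apply: closed_forall => rho; apply: closed_implies.
by apply: closed_le_continuous; apply: continuous_payoff => *;
  first [exact: coord_continuous | exact: cst_continuous].
Qed.

Lemma persuasion_value_exists (uS uR : A -> Omega -> R) :
    (exists (sigma : Omega -> M -> R) rho, R_BR mu0 uR sigma rho) ->
  exists v, is_max (persuasion_profile (M := M) mu0 uR) (payoff mu0 uS) v.
Proof.
move=> [sigma0 [rho0 BR0]].
pose K := [set v : V | forall i, `[0, 1] (v ord0 i)] `&`
          [set v | R_BR mu0 uR (msg_of_vec v) (act_of_vec v)].
have K_compact : compact K.
  apply: compact_closedI; last exact: closed_R_BR.
  by apply: (@rV_compact _ _ (fun=> `[0 : R, 1])) => _; exact: segment_compact.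
have K_profile sigma rho : R_BR mu0 uR sigma rho -> K (vec_of_profile sigma rho).
  move=> BR; split; last by rewrite /= msg_of_vecK act_of_vecK.
  move=> i /=; rewrite /vec_of_profile mxE in_itv /=.
  case: (enum_val i) => [[w m]|[m a]]; first exact: is_dist_bounds (BR.1 w).
  exact: is_dist_bounds (BR.2.1 m).
have payoff_cont :
    {within K, continuous (fun v => payoff mu0 uS (msg_of_vec v) (act_of_vec v))}.
  by apply: continuous_subspaceT; apply: continuous_payoff => *; exact: coord_continuous.
have [c /set_mem [_ c_BR] c_max] :=
  compact_EVT_max (ex_intro _ _ (K_profile _ _ BR0)) K_compact payoff_cont.
exists (payoff mu0 uS (msg_of_vec c) (act_of_vec c)); split.
  by exists (msg_of_vec c), (act_of_vec c).
move=> sigma rho BR; have := c_max (vec_of_profile sigma rho).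
by rewrite msg_of_vecK act_of_vecK; apply; apply/mem_set/K_profile.
Qed.

End PersuasionValue.

Lemma finite_pos_lower_bound (R : realType) (T : finType) (P : pred T) (F : T -> R) :
  (forall x, P x -> 0 < F x) -> exists2 t, 0 < t <= 1 & forall x, P x -> t <= F x.
Proof.
move=> F_pos; exists (\big[Order.min/1]_(x | P x) F x) => [|x Px].
  by rewrite bigmin_le_id andbT lt_bigmin.
exact: bigmin_le_cond.
Qed.

Definition generic_receiver (R : realType) (A Omega : finType)
    (mu0 : Omega -> R) (uR : A -> Omega -> R) : Prop :=
  forall (S : {set Omega}) (a a' : A), S != set0 -> a != a' ->
    \sum_(w in S) mu0 w * uR a w != \sum_(w in S) mu0 w * uR a' w.

Section GenericReceiver.
Variables (R : realType) (A Omega M : finType) (mu0 : Omega -> R) (uR : A -> Omega -> R).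
Hypothesis uR_generic : generic_receiver mu0 uR.
Variables (a0 : A) (w1 : Omega).
Implicit Types (f : Omega -> M) (m : M).

Local Notation W f := (msg_value mu0 uR (pure_msg f)).

Definition cell f m : {set Omega} := [set w | f w == m].

(* An unused message gets the reply to [f w1]: every reply is optimal there, and this
   choice makes a deviation to an unused message no better than one to a used message. *)
Definition best_reply f m : A :=
  let m' := if cell f m == set0 then f w1 else m in
  [arg max_(a > a0) \sum_(w in cell f m') mu0 w * uR a w]%O.

Lemma msg_value_cell (u : A -> Omega -> R) f m a :
  msg_value mu0 u (pure_msg f) m a = \sum_(w in cell f m) mu0 w * u a w.
Proof.
rewrite /msg_value [RHS]big_mkcond /=; apply: eq_bigr => w _.
by rewrite inE /pure_msg eq_sym; case: eqP => _; rewrite ?mulr1 ?mulr0 ?mul0r.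
Qed.

Lemma cell_image f w : cell f (f w) != set0.
Proof. by apply/set0Pn; exists w; rewrite inE. Qed.

Lemma best_reply_opt f m a : W f m a <= W f m (best_reply f m).
Proof.
rewrite !msg_value_cell /best_reply; have [->|used] := eqVneq (cell f m) set0.
  by rewrite !big_set0.
by case: arg_maxP => // b _; apply.
Qed.

Lemma best_reply_unused f m : cell f m = set0 -> best_reply f m = best_reply f (f w1).
Proof. by move=> unused; rewrite /best_reply unused eqxx (negbTE (cell_image f w1)). Qed.

Lemma best_reply_strict f m a : cell f m != set0 -> a != best_reply f m ->
  W f m a < W f m (best_reply f m).
Proof.
by move=> used a_ne; rewrite lt_neqAle best_reply_opt andbT !msg_value_cell uR_generic.
Qed.

Lemma R_BR_best_reply f : R_BR mu0 uR (pure_msg f) (pure_act (best_reply f)).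
Proof. by apply: R_BR_pure_act; [exact: msg_strategy_pure | exact: best_reply_opt]. Qed.

Lemma payoff_R_BR_pure_msg (u : A -> Omega -> R) f rho : R_BR mu0 uR (pure_msg f) rho ->
  payoff mu0 u (pure_msg f) rho = payoff mu0 u (pure_msg f) (pure_act (best_reply f)).
Proof.
move=> BR; rewrite !payoff_pure_msg; apply: eq_bigr => w _.
by rewrite (R_BR_strict_best BR (fun a => best_reply_strict (cell_image f w))).
Qed.

Lemma best_reply_gap f : exists2 t, 0 < t <= 1 & forall m a,
  cell f m != set0 -> a != best_reply f m -> t <= W f m (best_reply f m) - W f m a.
Proof.
pose P (p : M * A) := (cell f p.1 != set0) && (p.2 != best_reply f p.1).
have gap_pos (p : M * A) : P p -> 0 < W f p.1 (best_reply f p.1) - W f p.1 p.2.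
  by case/andP=> used a_ne; rewrite subr_gt0 best_reply_strict.
have [t t_range t_le] := finite_pos_lower_bound gap_pos.
by exists t => // m a used a_ne; apply: (t_le (m, a)); rewrite /P /= used a_ne.
Qed.

Section Incentives.
Hypothesis mu0_gt0 : forall w, 0 < mu0 w.
Hypothesis mu0_sum1 : \sum_w mu0 w = 1.
Hypothesis uR_range : forall a w, 0 <= uR a w <= 1.
Variable uS : A -> Omega -> R.

Lemma prior_le1 w : mu0 w <= 1.
Proof. by rewrite -mu0_sum1 (bigD1 w) //= lerDl sumr_ge0 // => v _; apply: ltW. Qed.

Lemma R_BR_deviate f w m' t : cell f m' != set0 -> 0 < t <= 1 ->
    (forall m a, cell f m != set0 -> a != best_reply f m ->
       t <= W f m (best_reply f m) - W f m a) ->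
  R_BR mu0 uR (deviate f w m' t) (pure_act (best_reply f)).
Proof.
move=> used' /andP[t_gt0 t_le1] t_le_gap.
apply: R_BR_pure_act => [|m a]; first by apply: msg_strategy_deviate; rewrite ltW.
rewrite !msg_value_deviate; set c : R := (m == m')%:R - (m == f w)%:R.
have [c0|c_ne0] := eqVneq c 0; first by rewrite c0 !(mulr0, mul0r, addr0) best_reply_opt.
have used : cell f m != set0.
  have [->//|m_ne'] := eqVneq m m'; have [->|m_ne] := eqVneq m (f w).
    exact: cell_image.
  by move: c_ne0; rewrite /c (negbTE m_ne') (negbTE m_ne) subrr eqxx.
set b := best_reply f m; have [->|a_ne] := eqVneq a b; first exact: lexx.
have shift_le1 : mu0 w * c * (uR a w - uR b w) <= 1.
  apply: le_trans (ler_norm _) _; rewrite !normrM.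
  have c_le1 : `|c| <= 1 by rewrite ler_norml /c; case: (m == m'); case: (m == f w) => /=; lra.
  have u_le1 : `|uR a w - uR b w| <= 1.
    by move: (uR_range a w) (uR_range b w); rewrite ler_norml => /andP[? ?] /andP[? ?]; lra.
  rewrite gtr0_norm // mulr_ile1 ?mulr_ge0 ?normr_ge0 ?mulr_ile1 ?prior_le1 //; exact: ltW.
have := t_le_gap m a used a_ne; have : t * (mu0 w * c * (uR a w - uR b w)) <= t.
  by rewrite -[X in _ <= X]mulr1 ler_wpM2l // ltW.
lra.
Qed.

Lemma best_reply_incentive f :
    (forall (sigma : Omega -> M -> R) rho, R_BR mu0 uR sigma rho ->
       payoff mu0 uS sigma rho <= payoff mu0 uS (pure_msg f) (pure_act (best_reply f))) ->
  forall w m, uS (best_reply f m) w <= uS (best_reply f (f w)) w.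
Proof.
move=> f_opt w m'.
wlog used' : m' / cell f m' != set0.
  move=> used_case; have [unused|] := eqVneq (cell f m') set0; last exact: used_case.
  by rewrite best_reply_unused //; apply: used_case; exact: cell_image.
have [t t_range t_le_gap] := best_reply_gap f.
have := f_opt _ _ (R_BR_deviate w used' t_range t_le_gap).
rewrite payoff_deviate gerDl; apply: contraLR; rewrite -!ltNge => gain.
by case/andP: t_range => t_gt0 _; rewrite !mulr_gt0 ?subr_gt0.
Qed.

Variable m0 : M.

Lemma partitional_persuasion_value : exists f : Omega -> M,
  is_max (fun (sigma : Omega -> M -> R) rho =>
            persuasion_profile mu0 uR sigma rho /\ partitional sigma)
    (payoff mu0 uS) (payoff mu0 uS (pure_msg f) (pure_act (best_reply f))).
Proof.
pose value (g : {ffun Omega -> M}) := payoff mu0 uS (pure_msg g) (pure_act (best_reply g)).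
have [g _ g_max] := @arg_maxP _ _ _ [ffun=> m0] xpredT value isT.
exists g; split.
  exists (pure_msg g), (pure_act (best_reply g)); split=> //; split.
    exact: R_BR_best_reply.
  by move=> w; exists (g w); rewrite /pure_msg eqxx.
move=> sigma rho [BR /(partitional_pure_msg BR.1) [f sigma_f]]; subst sigma.
rewrite payoff_R_BR_pure_msg //; have := g_max [ffun w => f w] isT.
by rewrite /value (_ : fun_of_fin [ffun w => f w] = f) //; apply: funext => w; rewrite ffunE.
Qed.

Lemma committed_of_cheap_talk_randomization :
  cheap_talk_values_randomization M mu0 uS uR -> committed_values_randomization M mu0 uS uR.
Proof.
move=> [vc [vc' [[[sc [rc [sc_eq <-]]] _] [[_ vc'_max] vc'_lt]]]].
have [vp vp_max] :=
  persuasion_value_exists uS (ex_intro _ _ (ex_intro _ _ (R_BR_best_reply (fun=> m0)))).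
have [f f_max] := partitional_persuasion_value.
exists vp, (payoff mu0 uS (pure_msg f) (pure_act (best_reply f))).
split; first exact: vp_max.
split; first exact: f_max.
rewrite ltNge; apply/negP => vp_le.
have f_opt (sigma : Omega -> M -> R) rho : R_BR mu0 uR sigma rho ->
    payoff mu0 uS sigma rho <= payoff mu0 uS (pure_msg f) (pure_act (best_reply f)).
  by move=> BR; apply: le_trans vp_le; exact: (vp_max.2 _ _ BR).
have f_eq : cheap_talk_eq mu0 uS uR (pure_msg f) (pure_act (best_reply f)).
  split; last exact: R_BR_best_reply.
  by apply: S_BR_pure => [w|]; [exact: ltW | exact: best_reply_incentive f_opt].
have f_part : partitional (pure_msg f : Omega -> M -> R).
  by move=> w; exists (f w); rewrite /pure_msg eqxx.
have := vc'_max _ _ (conj f_eq f_part); have := vp_max.2 _ _ sc_eq.2; lra.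
Qed.

End Incentives.
End GenericReceiver.

Section BoxCovers.
Variables (R : realType) (I : finType).
Implicit Types (N : (I -> R) -> Prop) (x : I -> R).

Definition box_cover N (eps : R) : Prop :=
  exists (J : finType) (lo hi : J -> I -> R),
    [/\ forall k i, lo k i <= hi k i,
        forall x, N x -> exists k, forall i, lo k i <= x i <= hi k i
      & \sum_k \prod_i (hi k i - lo k i) <= eps].

Lemma lebesgue_null_sub N N' : (forall x, N x -> N' x) -> lebesgue_null N' -> lebesgue_null N.
Proof.
move=> NN' N'_null eps eps_gt0; have [lo [hi [lo_hi [cover vol]]]] := N'_null eps eps_gt0.
by exists lo, hi; split=> //; split=> // x /NN' /cover.
Qed.

(* Padding with degenerate boxes needs a coordinate [i0]: over an empty index type every
   box has volume [1], and no set is null. *)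
Lemma lebesgue_null_box_covers (i0 : I) N :
  (forall eps, 0 < eps -> box_cover N eps) -> lebesgue_null N.
Proof.
move=> covers eps eps_gt0; have [J [lo [hi [lo_hi cover vol]]]] := covers eps eps_gt0.
pose s := [seq Some k | k <- enum J].
pose lo' (o : option J) i : R := if o is Some k then lo k i else 0.
pose hi' (o : option J) i : R := if o is Some k then hi k i else 0.
pose vol' o := \prod_i (hi' o i - lo' o i).
have vol'_ge0 o : 0 <= vol' o.
  by apply: prodr_ge0 => i _; rewrite subr_ge0; case: o => [k|] //; exact: lo_hi.
have vol'_None : vol' None = 0 by rewrite /vol' (bigD1 i0) //= subrr mul0r.
exists (fun k => lo' (nth None s k)), (fun k => hi' (nth None s k)).
split=> [k i|]; first by case: (nth None s k) => [k'|] //; exact: lo_hi.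
split=> [x /cover [k in_k]|n].
  by exists (index (Some k) s); rewrite nth_index // map_f ?mem_enum.
rewrite -(big_mkord xpredT (fun k => vol' (nth None s k))).
apply: (@le_trans _ _ (\sum_(0 <= k < n + size s) vol' (nth None s k))).
  by rewrite [leRHS](big_cat_nat _ (leq_addr _ _)) //= lerDl sumr_ge0.
rewrite (big_cat_nat _ (leq_addl _ _)) //= [X in _ + X]big_nat_cond.
rewrite [X in _ + X]big1 ?addr0 => [|k /andP[/andP[k_ge _] _]]; last first.
  by rewrite nth_default.
by rewrite -(big_nth None xpredT vol') big_map enumT.
Qed.

Definition grid_index (n : nat) (y : R) : 'I_n.+1 :=
  inord (minn (Num.truncn (y * n.+1%:R)) n).

Lemma grid_index_bounds n y : 0 <= y <= 1 ->
  (grid_index n y)%:R / n.+1%:R <= y <= (grid_index n y)%:R / n.+1%:R + n.+1%:R^-1.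
Proof.
move=> /andP[y_ge0 y_le1]; have n_gt0 : 0 < n.+1%:R :> R by rewrite ltr0n.
have /andP[trunc_le trunc_gt] := truncn_itv (mulr_ge0 y_ge0 (ltW n_gt0)).
rewrite /grid_index inordK ?ltnS ?geq_minr //; set k := minn _ n.
suff /andP[k_le k_ge] : k%:R <= y * n.+1%:R <= k%:R + 1.
  by rewrite -[X in _ <= _ + X]mul1r -mulrDl ler_pdivrMr // ler_pdivlMr // k_le.
have [t_le|t_gt] := leqP (Num.truncn (y * n.+1%:R)) n.
  by rewrite /k (minn_idPl t_le) trunc_le natr1 ltW.
have y1 : y = 1.
  apply/eqP; rewrite eq_le y_le1 -(ler_pM2r n_gt0) mul1r.
  by apply: le_trans trunc_le; rewrite ler_nat.
by rewrite /k (minn_idPr (ltnW t_gt)) y1 mul1r -natr1 lexx andbT lerDl ler01.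
Qed.

Section Slab.
Variables (lam : I -> R) (j : I) (n : nat).
Local Notation h := (n.+1%:R^-1 : R).

Definition slab_radius : R := (\sum_i `|lam i|) / `|lam j| * h.

Definition slab_center (g : {ffun I -> 'I_n.+1}) : R :=
  - (lam j)^-1 * \sum_(i | i != j) lam i * ((g i)%:R * h).

(* Boxes indexed by grid points [g] of the coordinates other than [j], thickened by
   [slab_radius] along [j]; the grid coordinate [g j] is redundant, so boxes with
   [g j != 0] are made degenerate. *)
Definition slab_lo (g : {ffun I -> 'I_n.+1}) i : R :=
  if i == j then (if g j == ord0 then slab_center g - slab_radius else 0) else (g i)%:R * h.
Definition slab_hi (g : {ffun I -> 'I_n.+1}) i : R :=
  if i == j then (if g j == ord0 then slab_center g + slab_radius else 0) else (g i)%:R * h + h.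

Lemma slab_radius_ge0 : 0 <= slab_radius.
Proof. by rewrite !mulr_ge0 ?invr_ge0 ?sumr_ge0. Qed.

Lemma slab_lo_le_hi g i : slab_lo g i <= slab_hi g i.
Proof.
rewrite /slab_lo /slab_hi; case: (i == j); last by rewrite lerDl invr_ge0.
case: (g j == ord0) => //.
by rewrite lerD2l (le_trans _ slab_radius_ge0) // oppr_le0 slab_radius_ge0.
Qed.

Lemma slab_covers x : lam j != 0 -> unit_cube x -> \sum_i lam i * x i = 0 ->
  exists g, forall i, slab_lo g i <= x i <= slab_hi g i.
Proof.
move=> lam_j x_cube x_on.
pose g := [ffun i => if i == j then ord0 else grid_index n (x i)].
have g_off i : i != j -> (g i)%:R * h <= x i <= (g i)%:R * h + h.
  by move=> /negbTE i_ne; rewrite ffunE i_ne; exact: grid_index_bounds.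
exists g => i; rewrite /slab_lo /slab_hi; have [->|/g_off //] := eqVneq i j.
rewrite ffunE eqxx eqxx -ler_distlC.
have x_j : x j = - (lam j)^-1 * \sum_(i | i != j) lam i * x i.
  apply: (mulfI lam_j); rewrite mulrA mulrN mulfV // mulN1r.
  by apply/eqP; rewrite -subr_eq0 opprK; move: x_on; rewrite (bigD1 j) //= => ->.
rewrite x_j /slab_center -mulrBr normrM normrN normfV -sumrB.
rewrite /slab_radius [leRHS]mulrAC [leRHS]mulrC ler_wpM2l ?invr_ge0 //.
apply: le_trans (ler_norm_sum _ _ _) _; rewrite mulr_suml.
apply: le_trans (_ : \sum_(i | i != j) `|lam i| * h <= _); last first.
  by rewrite [leRHS](bigD1 j) //= lerDr mulr_ge0 ?invr_ge0.
apply: ler_sum => k /g_off; rewrite -mulrBr normrM => /andP[lo hi].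
rewrite ler_wpM2l // ler_norml.
by move: lo hi; set y := _ / _; set d := _^-1 => lo hi; apply/andP; split; lra.
Qed.

Lemma slab_volume : \sum_g \prod_i (slab_hi g i - slab_lo g i) = 2 * slab_radius.
Proof.
pose w i (t : 'I_n.+1) : R :=
  if i == j then (if t == ord0 then 2 * slab_radius else 0) else h.
rewrite (eq_bigr (fun g : {ffun I -> 'I_n.+1} => \prod_i w i (g i))); last first.
  move=> g _; apply: eq_bigr => i _; rewrite /slab_hi /slab_lo /w.
  case: eqP => [->|_]; last by ring.
  by case: (g j == ord0); rewrite ?subrr //; ring.
rewrite -bigA_distr_bigA /= (bigD1 j) //= [X in _ * X]big1 ?mulr1; last first.
  move=> i /negbTE i_ne; rewrite /w i_ne sumr_const card_ord.
  by rewrite -[_^-1 *+ _]mulr_natr mulVf ?pnatr_eq0.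
by rewrite (bigD1 ord0) //= big1 ?addr0 /w ?eqxx // => t /negbTE ->.
Qed.

End Slab.

Lemma hyperplanes_null (i0 : I) (C : finType) (lam : C -> I -> R) (j : C -> I) :
    (forall c, lam c (j c) != 0) ->
  lebesgue_null (fun x => unit_cube x /\ exists c, \sum_i lam c i * x i = 0).
Proof.
move=> lam_j; apply: (lebesgue_null_box_covers i0) => eps eps_gt0.
pose K := \sum_c (\sum_i `|lam c i|) / `|lam c (j c)|.
pose n := Num.truncn (2 * K / eps).
exists (C * {ffun I -> 'I_n.+1})%type,
  (fun p => slab_lo (lam p.1) (j p.1) p.2), (fun p => slab_hi (lam p.1) (j p.1) p.2).
split=> [[c g] i|x [x_cube [c x_on]]|]; first exact: slab_lo_le_hi.
  by have [g g_box] := slab_covers n (lam_j c) x_cube x_on; exists (c, g).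
pose vol c (g : {ffun I -> 'I_n.+1}) :=
  \prod_i (slab_hi (lam c) (j c) g i - slab_lo (lam c) (j c) g i).
rewrite -(pair_bigA _ vol).
under eq_bigr do rewrite slab_volume.
rewrite -mulr_sumr -mulr_suml mulrA ler_pdivrMr ?ltr0n // [leRHS]mulrC.
have K_ge0 : 0 <= 2 * K / eps.
  rewrite divr_ge0 ?(ltW eps_gt0) // mulr_ge0 //.
  by apply: sumr_ge0 => c _; rewrite divr_ge0 ?sumr_ge0.
by have /andP[_] := truncn_itv K_ge0; rewrite ltr_pdivrMr // => /ltW.
Qed.

End BoxCovers.

Section Ties.
Variables (R : realType) (A Omega : finType) (mu0 : Omega -> R).

Definition tie_form (p : {set Omega} * A * A) (i : bool * A * Omega) : R :=
  let: (D, a, a') := p in let: (sender, x, w) := i in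
  if sender then 0 else (w \in D)%:R * mu0 w * ((x == a)%:R - (x == a')%:R).

Lemma tie_formE D a a' (e : bool * A * Omega -> R) :
  \sum_i tie_form (D, a, a') i * e i =
  \sum_(w in D) mu0 w * env_uR e a w - \sum_(w in D) mu0 w * env_uR e a' w.
Proof.
have -> : \sum_i tie_form (D, a, a') i * e i =
    \sum_(sender : bool) \sum_x \sum_w tie_form (D, a, a') (sender, x, w) * e (sender, x, w).
  by rewrite [RHS]pair_bigA [RHS]pair_bigA; apply: eq_bigr => -[[]].
rewrite big_bool /= big1 ?add0r => [|x _]; last by apply: big1 => w _; rewrite mul0r.
rewrite /env_uR exchange_big -sumrB [RHS]big_mkcond /=; apply: eq_bigr => w _.
have [w_in|w_out] := boolP (w \in D); last by apply: big1 => x _; rewrite !mul0r.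
rewrite -(sum_indicator (fun x => mu0 w * e (false, x, w)) a).
rewrite -(sum_indicator (fun x => mu0 w * e (false, x, w)) a') -sumrB.
by apply: eq_bigr => x _; rewrite mul1r; ring.
Qed.

Definition tie := {p : {set Omega} * A * A | (p.1.1 != set0) && (p.1.2 != p.2)}.

Lemma generic_receiver_ae (a0 : A) (w0 : Omega) : (forall w, 0 < mu0 w) ->
  lebesgue_null (fun e : bool * A * Omega -> R =>
    unit_cube e /\ ~ generic_receiver mu0 (env_uR e)).
Proof.
move=> mu0_gt0.
pose lam (c : tie) := tie_form (val c).
pose j (c : tie) : bool * A * Omega :=
  (false, (val c).1.2, odflt w0 [pick w in (val c).1.1]).
have lam_j c : lam c (j c) != 0.
  case: c => -[[D a] a'] /= tie_ok; have /andP[D_ne a_ne] := tie_ok.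
  rewrite /lam /j /=.
  case: pickP => [w w_in|D_empty]; last by case/set0Pn: D_ne => w; rewrite D_empty.
  by rewrite w_in eqxx (negbTE a_ne) mul1r subr0 mulr1 gt_eqF.
apply: lebesgue_null_sub (hyperplanes_null (false, a0, w0) lam_j) => e [e_cube not_generic].
split=> //; apply: contra_notP not_generic => no_tie D a a' D_ne a_ne.
apply/negP => /eqP tied; apply: no_tie.
have tie_ok : ((D, a, a').1.1 != set0) && ((D, a, a').1.2 != (D, a, a').2) by rewrite /= D_ne.
by exists (exist _ (D, a, a') tie_ok); rewrite /lam /= tie_formE tied subrr.
Qed.

End Ties.

Theorem corollary1 (R : realType) (A Omega M : finType)
  (mu0 : Omega -> R)
  (hA : (0 < #|A|)%N) (hOmega : (0 < #|Omega|)%N)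
  (hmu_pos : forall w, 0 < mu0 w) (hmu_sum : \sum_(w : Omega) mu0 w = 1)
  (hM : (maxn #|Omega| #|A| < #|M|)%N) :
  exists G : (bool * A * Omega -> R) -> Prop,
    (forall e, G e -> unit_cube e) /\
    lebesgue_null (fun e => unit_cube e /\ ~ G e) /\
    forall e, G e ->
      cheap_talk_values_randomization M mu0 (env_uS e) (env_uR e) ->
      committed_values_randomization M mu0 (env_uS e) (env_uR e).
Proof.
have [w1 _] := card_gt0P hOmega; have [a0 _] := card_gt0P hA.
have [m0 _] := card_gt0P (leq_ltn_trans (leq0n _) hM).
exists (fun e => unit_cube e /\ generic_receiver mu0 (env_uR e)).
split; first by move=> e [].
split.
  apply: lebesgue_null_sub (generic_receiver_ae a0 w1 hmu_pos) => e [e_cube not_G].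
  by split=> // generic; apply: not_G.
move=> e [e_cube generic].
have uR_range a w : 0 <= env_uR e a w <= 1 by apply: e_cube.
exact: committed_of_cheap_talk_randomization generic a0 w1 hmu_pos hmu_sum uR_range _ m0.
Qed.
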